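(* Let $(\hat\xi,\hat\tau)$ be a maximizer of $\mathrm E_n[\log\{1+\mathcal F(\xi+q(\cdot;\tau))\}]$ over $\xi\in\mathbb R$, $\tau\in\Theta_\tau$ (restricted to parameters for which $1+\mathcal F(\xi+q(\cdot;\tau))(x^{(i)},a^{(i)})>0$ for all $i$), assumed to exist, and define $$\hat c=\mathrm E_n\Big[\frac{1}{1+\mathcal F(\hat\xi+q(\cdot;\hat\tau))}\Big],\qquad \hat\beta_{\mathrm{emp}}=\mathrm E_n\Big[\frac{\hat c^{-1}\,w\,r}{1+\mathcal F(\hat\xi+q(\cdot;\hat\tau))}\Big].$$ Then (1-boundedness) $0\le\hat\beta_{\mathrm{emp}}\le R_{\max}$; and (stability) if, conditionally on $\mathcal D_{x,a}=\{(x^{(i)},a^{(i)})\}_{i=1}^n$, the rewards $r^{(1)},\dots,r^{(n)}$ are independent with $\mathrm{var}(r^{(i)}\mid\mathcal D_{x,a})\le\sigma^2$ for all $i$, then $\mathrm{var}(\hat\beta_{\mathrm{emp}}\mid\mathcal D_{x,a})\le\sigma^2$.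
   Context: Contextual bandit setting. $\mathcal A$ is a finite action set. The data are $n$ i.i.d. triples $(x^{(i)},a^{(i)},r^{(i)})$, each distributed as $(x,a,r)$ where $x\sim P_0$, $a\mid x\sim\pi_b(\cdot\mid x)$ and $r\mid(x,a)\sim P_r(x,a)$ with $r\in[0,R_{\max}]$. $\pi_e$ is the evaluation policy, overlap holds, and $w=w(x,a)=\pi_e(a|x)/\pi_b(a|x)$ is bounded. $\mathrm E_n[f]=n^{-1}\sum_{i=1}^n f(x^{(i)},a^{(i)},r^{(i)})$. For $m:\mathcal X\times\mathcal A\to\mathbb R$, $\mathcal F(m)(x,a)=w(x,a)m(x,a)-\sum_{a'\in\mathcal A}m(x,a')\pi_e(a'|x)$; note $\mathcal F(\xi+q)=\xi(w-1)+\mathcal F(q)$ for a constant $\xi$. A Q-function model $q(x,a;\tau)$, $\tau\in\Theta_\tau$, with $|q|\le R_{\max}$. *)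

From Stdlib Require Export Reals List.
Export ListNotations.
Open Scope R_scope.

(** Finite sums / products over indices 0..n-1 (data points i = 1..n shifted to 0..n-1). *)
Fixpoint Rsum (n : nat) (f : nat -> R) : R :=
  match n with O => 0 | S k => Rsum k f + f k end.
Fixpoint Rprod (n : nat) (f : nat -> R) : R :=
  match n with O => 1 | S k => Rprod k f * f k end.

Definition lsum {A : Type} (l : list A) (f : A -> R) : R :=
  fold_right (fun a s => f a + s) 0 l.

Definition En (n : nat) (f : nat -> R) : R := Rsum n f / INR n.

(** Importance weight w(x,a) = pi_e(a|x)/pi_b(a|x); policies written pi x a = pi(a|x). *)
Definition wgt {X A : Type} (pe pb : X -> A -> R) (x : X) (a : A) : R :=
  pe x a / pb x a.

Definition Fop {X A : Type} (acts : list A) (pe pb : X -> A -> R)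
  (m : X -> A -> R) (x : X) (a : A) : R :=
  wgt pe pb x a * m x a - lsum acts (fun a' => m x a' * pe x a').

Definition shiftq {X A Th : Type} (q : X -> A -> Th -> R) (xi : R) (tau : Th) : X -> A -> R :=
  fun x a => xi + q x a tau.

Definition denom {X A Th : Type} (acts : list A) (pe pb : X -> A -> R)
  (q : X -> A -> Th -> R) (xs : nat -> X) (as_ : nat -> A) (xi : R) (tau : Th) (i : nat) : R :=
  1 + Fop acts pe pb (shiftq q xi tau) (xs i) (as_ i).

Definition objective {X A Th : Type} (acts : list A) (pe pb : X -> A -> R)
  (q : X -> A -> Th -> R) (n : nat) (xs : nat -> X) (as_ : nat -> A) (xi : R) (tau : Th) : R :=
  En n (fun i => ln (denom acts pe pb q xs as_ xi tau i)).

Definition feasible {X A Th : Type} (acts : list A) (pe pb : X -> A -> R)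
  (q : X -> A -> Th -> R) (Theta : Th -> Prop) (n : nat) (xs : nat -> X) (as_ : nat -> A)
  (xi : R) (tau : Th) : Prop :=
  Theta tau /\ forall i, (i < n)%nat -> 0 < denom acts pe pb q xs as_ xi tau i.

Definition c_hat {X A Th : Type} (acts : list A) (pe pb : X -> A -> R)
  (q : X -> A -> Th -> R) (n : nat) (xs : nat -> X) (as_ : nat -> A) (xi : R) (tau : Th) : R :=
  En n (fun i => 1 / denom acts pe pb q xs as_ xi tau i).

Definition beta_emp {X A Th : Type} (acts : list A) (pe pb : X -> A -> R)
  (q : X -> A -> Th -> R) (n : nat) (xs : nat -> X) (as_ : nat -> A) (xi : R) (tau : Th)
  (r : nat -> R) : R :=
  En n (fun i => / c_hat acts pe pb q n xs as_ xi tau * wgt pe pb (xs i) (as_ i) * r i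
                 / denom acts pe pb q xs as_ xi tau i).

(** Abstract (conditional) probability model: an expectation functional on
    bounded random variables over a sample space Omega. *)
Definition bounded_rv {Omega : Type} (f : Omega -> R) : Prop :=
  exists M, forall w, Rabs (f w) <= M.

Definition is_expectation {Omega : Type} (E : (Omega -> R) -> R) : Prop :=
  (forall f g, bounded_rv f -> bounded_rv g -> E (fun w => f w + g w) = E f + E g) /\
  (forall c f, bounded_rv f -> E (fun w => c * f w) = c * E f) /\
  (forall f g, bounded_rv f -> bounded_rv g -> (forall w, f w <= g w) -> E f <= E g) /\
  E (fun _ => 1) = 1.

Definition Var {Omega : Type} (E : (Omega -> R) -> R) (f : Omega -> R) : R :=
  E (fun w => (f w - E f) ^ 2).

Definition mutually_independent {Omega : Type} (E : (Omega -> R) -> R) (n : nat)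
  (r : nat -> Omega -> R) : Prop :=
  forall g : nat -> R -> R, (forall i, continuity (g i)) ->
    E (fun w => Rprod n (fun i => g i (r i w))) = Rprod n (fun i => E (fun w => g i (r i w))).

(** Write d_i = 1 + F(xi + q(.;tau))(x_i,a_i) and w_i for the
    importance weight at the i-th data point.  Because pi_e(.|x) sums to one,
    d_i is affine in xi with slope w_i - 1.  The maximizer (xi_hat, tau_hat)
    maximizes in particular the concave function xi |-> sum_i ln d_i(xi) on the
    open set where all d_i are positive, so its derivative vanishes there:
    sum_i (w_i - 1)/d_i = 0, i.e. sum_i w_i/d_i = sum_i 1/d_i = n c_hat.
    Consequently beta_emp = sum_i p_i r_i with p_i = (w_i/d_i) / sum_j (w_j/d_j),
    a vector of convex weights.  Both claims are then facts about convex
    combinations: one of numbers in [0, Rmax] lies in [0, Rmax], and for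
    pairwise uncorrelated (in particular independent) variables
    Var(sum p_i r_i) = sum p_i^2 Var r_i <= max_i Var r_i. *)

From Stdlib Require Import Reals Lra Lia FunctionalExtensionality.
Open Scope R_scope.

Lemma Rsum_ext n f g : (forall i, (i < n)%nat -> f i = g i) -> Rsum n f = Rsum n g.
Proof.
  induction n as [|n IH]; simpl; intros H; auto.
  rewrite IH, H by (intros; try apply H; lia). reflexivity.
Qed.

Lemma Rsum_zero n : Rsum n (fun _ => 0) = 0.
Proof. induction n as [|n IH]; simpl; [|rewrite IH]; ring. Qed.

Lemma Rsum_plus n f g : Rsum n (fun i => f i + g i) = Rsum n f + Rsum n g.
Proof. induction n as [|n IH]; simpl; [|rewrite IH]; ring. Qed.

Lemma Rsum_scal n c f : Rsum n (fun i => c * f i) = c * Rsum n f.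
Proof. induction n as [|n IH]; simpl; [|rewrite IH]; ring. Qed.

Lemma Rsum_le n f g : (forall i, (i < n)%nat -> f i <= g i) -> Rsum n f <= Rsum n g.
Proof.
  induction n as [|n IH]; simpl; intros H; [lra|].
  assert (f n <= g n) by (apply H; lia).
  assert (Rsum n f <= Rsum n g) by (apply IH; intros; apply H; lia).
  lra.
Qed.

Lemma Rsum_nonneg n f : (forall i, (i < n)%nat -> 0 <= f i) -> 0 <= Rsum n f.
Proof. intros H. rewrite <- (Rsum_zero n). apply Rsum_le, H. Qed.

Lemma Rsum_pos n f : (1 <= n)%nat -> (forall i, (i < n)%nat -> 0 < f i) -> 0 < Rsum n f.
Proof.
  destruct n as [|n]; [lia|]. intros _ H; simpl.
  assert (0 <= Rsum n f) by (apply Rsum_nonneg; intros; left; apply H; lia).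
  assert (0 < f n) by (apply H; lia).
  lra.
Qed.

Lemma Rsum_term_le n f k :
  (k < n)%nat -> (forall i, (i < n)%nat -> 0 <= f i) -> f k <= Rsum n f.
Proof.
  induction n as [|n IH]; intros Hk H; [lia|]. simpl.
  assert (0 <= f n) by (apply H; lia).
  destruct (Nat.eq_dec k n) as [->|Hkn].
  - assert (0 <= Rsum n f) by (apply Rsum_nonneg; intros; apply H; lia). lra.
  - assert (f k <= Rsum n f) by (apply IH; [lia|intros; apply H; lia]). lra.
Qed.

(** Products in which all but one, resp. two, factors equal one; needed to
    extract pairwise statements from the product form of independence. *)
Lemma Rprod_ones n h : (forall k, (k < n)%nat -> h k = 1) -> Rprod n h = 1.
Proof.
  induction n as [|n IH]; simpl; intros H; auto.
  rewrite IH, H by (intros; try apply H; lia). ring.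
Qed.

Lemma Rprod_single n h i :
  (i < n)%nat -> (forall k, (k < n)%nat -> k <> i -> h k = 1) -> Rprod n h = h i.
Proof.
  induction n as [|n IH]; simpl; intros Hi H; [lia|].
  destruct (Nat.eq_dec i n) as [->|Hin].
  - rewrite Rprod_ones by (intros; apply H; lia). ring.
  - rewrite IH, (H n) by (intros; try apply H; lia). ring.
Qed.

Lemma Rprod_two n h i j : (i < j)%nat -> (j < n)%nat ->
  (forall k, (k < n)%nat -> k <> i -> k <> j -> h k = 1) -> Rprod n h = h i * h j.
Proof.
  induction n as [|n IH]; simpl; intros Hij Hj H; [lia|].
  destruct (Nat.eq_dec j n) as [->|Hjn].
  - rewrite (Rprod_single _ _ i) by (intros; try apply H; lia). ring.
  - rewrite IH, (H n) by (intros; try apply H; lia). ring.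
Qed.

Definition convex_weights (n : nat) (p : nat -> R) : Prop :=
  (forall i, (i < n)%nat -> 0 <= p i) /\ Rsum n p = 1.

Lemma normalized_convex_weights n u :
  (forall i, (i < n)%nat -> 0 <= u i) -> 0 < Rsum n u ->
  convex_weights n (fun i => u i / Rsum n u).
Proof.
  intros Hu Hs. split.
  - intros i Hi. unfold Rdiv. apply Rmult_le_pos; [apply Hu, Hi|].
    left; apply Rinv_0_lt_compat, Hs.
  - rewrite (Rsum_ext n _ (fun i => / Rsum n u * u i)) by (intros; unfold Rdiv; ring).
    rewrite Rsum_scal. field. lra.
Qed.

Lemma convex_weight_le_1 n p i : convex_weights n p -> (i < n)%nat -> p i <= 1.
Proof. intros [Hp Hs] Hi. rewrite <- Hs. apply Rsum_term_le; auto. Qed.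

Lemma convex_comb_bounds n p r M : convex_weights n p ->
  (forall i, (i < n)%nat -> 0 <= r i <= M) -> 0 <= Rsum n (fun i => p i * r i) <= M.
Proof.
  intros [Hp Hs] Hr. split.
  - apply Rsum_nonneg. intros i Hi. apply Rmult_le_pos; [apply Hp|apply Hr]; auto.
  - apply Rle_trans with (Rsum n (fun i => M * p i)).
    + apply Rsum_le. intros i Hi. specialize (Hp i Hi). specialize (Hr i Hi). nra.
    + rewrite Rsum_scal, Hs. lra.
Qed.

(** Squared convex weights against values in [0, s] sum to at most s: this is
    the inequality behind variance stability (p_i^2 v_i <= p_i v_i <= p_i s). *)
Lemma convex_sq_weights_bound n p v s : convex_weights n p ->
  (forall i, (i < n)%nat -> 0 <= v i <= s) -> Rsum n (fun i => p i ^ 2 * v i) <= s.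
Proof.
  intros Hc Hv. pose proof Hc as [Hp Hs].
  apply Rle_trans with (Rsum n (fun i => s * p i)).
  - apply Rsum_le. intros i Hi.
    assert (Hp1 : p i <= 1) by (apply (convex_weight_le_1 n); auto).
    specialize (Hp i Hi). specialize (Hv i Hi).
    assert (0 <= p i * (1 - p i) * v i) by (apply Rmult_le_pos; [apply Rmult_le_pos|]; lra).
    assert (0 <= p i * (s - v i)) by (apply Rmult_le_pos; lra).
    simpl. nra.
  - rewrite Rsum_scal, Hs. lra.
Qed.

(** * First-order condition for sums of logarithms of affine functions *)

Lemma derivable_pt_lim_affine b a c : derivable_pt_lim (fun x => b + x * a) c a.
Proof.
  assert (H := derivable_pt_lim_plus _ _ c _ _ (derivable_pt_lim_const b c)
    (derivable_pt_lim_mult id (fct_cte a) c 1 0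
       (derivable_pt_lim_id c) (derivable_pt_lim_const a c))).
  unfold plus_fct, mult_fct, fct_cte, id in H.
  replace (0 + (1 * a + c * 0)) with a in H by ring. exact H.
Qed.

Lemma derivable_pt_lim_sum_ln_affine n B a c :
  (forall i, (i < n)%nat -> 0 < B i + c * a i) ->
  derivable_pt_lim (fun x => Rsum n (fun i => ln (B i + x * a i))) c
    (Rsum n (fun i => a i / (B i + c * a i))).
Proof.
  induction n as [|n IH]; intros H; simpl.
  - apply derivable_pt_lim_const.
  - apply (derivable_pt_lim_plus (fun x => Rsum n (fun i => ln (B i + x * a i)))
                                 (fun x => ln (B n + x * a n))).
    + apply IH. intros; apply H; lia.
    + replace (a n / (B n + c * a n)) with (/ (B n + c * a n) * a n)
        by (unfold Rdiv; ring).
      apply (derivable_pt_lim_comp (fun x => B n + x * a n) ln).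
      * apply derivable_pt_lim_affine.
      * apply derivable_pt_lim_ln, H. lia.
Qed.

(** Finitely many positive quantities stay positive under small perturbations
    along fixed directions: the feasible set is open in xi. *)
Lemma positive_perturbation n (d a : nat -> R) :
  (forall i, (i < n)%nat -> 0 < d i) ->
  exists delta, 0 < delta /\
    forall i h, (i < n)%nat -> Rabs h < delta -> 0 < d i + h * a i.
Proof.
  induction n as [|n IH]; intros H.
  - exists 1. split; [lra|intros; lia].
  - destruct IH as [delta0 [Hdelta0 Hpert]]; [intros; apply H; lia|].
    assert (Hdn : 0 < d n) by (apply H; lia).
    assert (Ha : 0 <= Rabs (a n)) by apply Rabs_pos.
    set (delta1 := d n / (Rabs (a n) + 1)).
    assert (Hdelta1 : 0 < delta1) by (apply Rdiv_lt_0_compat; lra).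
    exists (Rmin delta0 delta1). split; [apply Rmin_glb_lt; auto|].
    intros i h Hi Hh. destruct (Nat.eq_dec i n) as [->|Hin].
    + assert (Rabs h < delta1) by (eapply Rlt_le_trans; [apply Hh|apply Rmin_r]).
      assert (delta1 * (Rabs (a n) + 1) = d n) by (unfold delta1; field; lra).
      assert (- (h * a n) <= Rabs h * Rabs (a n))
        by (rewrite <- Rabs_mult, <- Rabs_Ropp; apply Rle_abs).
      nra.
    + apply Hpert; [lia|]. eapply Rlt_le_trans; [apply Hh|apply Rmin_l].
Qed.

Lemma sum_ln_affine_stationary n B a c :
  (forall i, (i < n)%nat -> 0 < B i + c * a i) ->
  (forall x, (forall i, (i < n)%nat -> 0 < B i + x * a i) ->
     Rsum n (fun i => ln (B i + x * a i)) <= Rsum n (fun i => ln (B i + c * a i))) ->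
  Rsum n (fun i => a i / (B i + c * a i)) = 0.
Proof.
  intros Hpos Hmax.
  destruct (positive_perturbation n (fun i => B i + c * a i) a Hpos)
    as [delta [Hdelta Hpert]].
  set (f := fun x => Rsum n (fun i => ln (B i + x * a i))).
  assert (Hder := derivable_pt_lim_sum_ln_affine n B a c Hpos).
  apply (deriv_maximum f (c - delta) (c + delta) c (exist _ _ Hder)); try lra.
  intros x Hlo Hhi. apply Hmax. intros i Hi.
  replace (B i + x * a i) with (B i + c * a i + (x - c) * a i) by ring.
  apply Hpert; [exact Hi|]. apply Rabs_def1; lra.
Qed.

(** * The estimator as a convex combination of the rewards *)

Section Model.
Variables (X A Th : Type) (acts : list A) (pe pb : X -> A -> R).
Variable q : X -> A -> Th -> R.
Variables (n : nat) (xs : nat -> X) (as_ : nat -> A).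
Hypothesis Hpe : forall x, (forall a, 0 <= pe x a) /\ lsum acts (fun a => pe x a) = 1.
Hypothesis Hn : (1 <= n)%nat.
Hypothesis Hsupp : forall i, (i < n)%nat -> 0 < pb (xs i) (as_ i).

Lemma lsum_shift {B : Type} (l : list B) (x : R) (f g : B -> R) :
  lsum l (fun b => (x + f b) * g b) = x * lsum l g + lsum l (fun b => f b * g b).
Proof. induction l as [|b l IH]; unfold lsum in *; simpl; [|rewrite IH]; ring. Qed.

(** Since pi_e(.|x) sums to one, F(xi + q) = xi (w - 1) + F(q): the
    denominator is affine in xi with slope w - 1. *)
Lemma denom_affine tau xi i :
  denom acts pe pb q xs as_ xi tau i =
  denom acts pe pb q xs as_ 0 tau i + xi * (wgt pe pb (xs i) (as_ i) - 1).
Proof.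
  unfold denom, Fop, shiftq.
  rewrite (lsum_shift acts xi (fun a => q (xs i) a tau) (fun a => pe (xs i) a)),
          (lsum_shift acts 0 (fun a => q (xs i) a tau) (fun a => pe (xs i) a)),
          (proj2 (Hpe (xs i))).
  ring.
Qed.

Lemma wgt_nonneg i : (i < n)%nat -> 0 <= wgt pe pb (xs i) (as_ i).
Proof.
  intros Hi. unfold wgt, Rdiv. apply Rmult_le_pos; [apply Hpe|].
  left. apply Rinv_0_lt_compat, Hsupp, Hi.
Qed.

Variables (Theta : Th -> Prop) (xi_hat : R) (tau_hat : Th).
Hypothesis Hfeas : feasible acts pe pb q Theta n xs as_ xi_hat tau_hat.
Hypothesis Hmax : forall xi tau, feasible acts pe pb q Theta n xs as_ xi tau ->
  objective acts pe pb q n xs as_ xi tau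
  <= objective acts pe pb q n xs as_ xi_hat tau_hat.

Let d i := denom acts pe pb q xs as_ xi_hat tau_hat i.
Let w i := wgt pe pb (xs i) (as_ i).

Lemma denom_hat_pos i : (i < n)%nat -> 0 < d i.
Proof. apply (proj2 Hfeas). Qed.

(** Score equation in xi: stationarity of the objective in the direction of
    the constant shift gives sum_i (w_i - 1)/d_i = 0. *)
Lemma score_equation : Rsum n (fun i => w i / d i) = Rsum n (fun i => 1 / d i).
Proof.
  set (B i := denom acts pe pb q xs as_ 0 tau_hat i).
  set (a i := w i - 1).
  assert (Hd : forall xi i, denom acts pe pb q xs as_ xi tau_hat i = B i + xi * a i)
    by (intros; apply denom_affine).
  assert (Hstat : Rsum n (fun i => a i / (B i + xi_hat * a i)) = 0).
  { apply sum_ln_affine_stationary.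
    - intros i Hi. rewrite <- Hd. apply denom_hat_pos, Hi.
    - intros x Hx.
      assert (Hfx : feasible acts pe pb q Theta n xs as_ x tau_hat).
      { split; [apply Hfeas|]. intros i Hi. rewrite Hd. apply Hx, Hi. }
      assert (Hn0 : 0 < / INR n) by (apply Rinv_0_lt_compat, lt_0_INR; lia).
      assert (Hobj := Hmax x tau_hat Hfx). unfold objective, En, Rdiv in Hobj.
      apply Rmult_le_reg_r in Hobj; [|exact Hn0].
      rewrite !(Rsum_ext n (fun i => ln (denom _ _ _ _ _ _ _ _ i))
                       (fun i => ln (B i + _ * a i))) in Hobj
        by (intros; rewrite Hd; reflexivity).
      exact Hobj. }
  rewrite (Rsum_ext n _ (fun i => 1 / d i + a i / (B i + xi_hat * a i)))
    by (intros i _; unfold d; rewrite Hd; unfold a, Rdiv; ring).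
  rewrite Rsum_plus, Hstat. ring.
Qed.

Lemma weighted_score_pos : 0 < Rsum n (fun j => w j / d j).
Proof.
  rewrite score_equation. apply Rsum_pos; [exact Hn|].
  intros i Hi. apply Rdiv_lt_0_compat; [lra|apply denom_hat_pos, Hi].
Qed.

Definition beta_weights (i : nat) : R := (w i / d i) / Rsum n (fun j => w j / d j).

Lemma beta_weights_convex : convex_weights n beta_weights.
Proof.
  apply normalized_convex_weights.
  - intros i Hi. unfold Rdiv. apply Rmult_le_pos; [apply wgt_nonneg, Hi|].
    left. apply Rinv_0_lt_compat, denom_hat_pos, Hi.
  - apply weighted_score_pos.
Qed.

(** c_hat^{-1} = n / sum_i (w_i/d_i), so beta_emp is the p-weighted mean of r. *)
Lemma beta_emp_convex_comb r :
  beta_emp acts pe pb q n xs as_ xi_hat tau_hat r = Rsum n (fun i => beta_weights i * r i).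
Proof.
  assert (Hn0 : 0 < INR n) by (apply lt_0_INR; lia).
  assert (HS := weighted_score_pos).
  assert (Hc : c_hat acts pe pb q n xs as_ xi_hat tau_hat = Rsum n (fun j => w j / d j) / INR n)
    by (unfold c_hat, En; rewrite score_equation; reflexivity).
  unfold beta_emp, En. rewrite Hc. fold w d.
  unfold beta_weights, Rdiv at 1.
  rewrite Rmult_comm, <- Rsum_scal. apply Rsum_ext. intros i Hi.
  assert (0 < d i) by (apply denom_hat_pos, Hi).
  fold (d i) (w i). field. lra.
Qed.

End Model.

(** * Bounded random variables and the abstract expectation *)

Section BoundedRV.
Context {Omega : Type}.

Lemma bounded_rv_ext (f g : Omega -> R) :
  (forall x, f x = g x) -> bounded_rv f -> bounded_rv g.
Proof. intros H [M HM]. exists M. intros x. rewrite <- H. apply HM. Qed.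

Lemma bounded_rv_const c : bounded_rv (fun _ : Omega => c).
Proof. exists (Rabs c). intros; lra. Qed.

Lemma bounded_rv_plus (f g : Omega -> R) :
  bounded_rv f -> bounded_rv g -> bounded_rv (fun x => f x + g x).
Proof.
  intros [M1 H1] [M2 H2]. exists (M1 + M2). intros x.
  eapply Rle_trans; [apply Rabs_triang|]. specialize (H1 x). specialize (H2 x). lra.
Qed.

Lemma bounded_rv_mult (f g : Omega -> R) :
  bounded_rv f -> bounded_rv g -> bounded_rv (fun x => f x * g x).
Proof.
  intros [M1 H1] [M2 H2]. exists (M1 * M2). intros x. rewrite Rabs_mult.
  apply Rmult_le_compat; auto using Rabs_pos.
Qed.

Lemma bounded_rv_scal c (f : Omega -> R) : bounded_rv f -> bounded_rv (fun x => c * f x).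
Proof. apply bounded_rv_mult, bounded_rv_const. Qed.

Lemma bounded_rv_sq (f : Omega -> R) : bounded_rv f -> bounded_rv (fun x => f x ^ 2).
Proof.
  intros Hf. apply (bounded_rv_ext (fun x => f x * f x)); [intros; ring|].
  apply bounded_rv_mult; exact Hf.
Qed.

Lemma bounded_rv_Rsum k (f : nat -> Omega -> R) :
  (forall i, (i < k)%nat -> bounded_rv (f i)) -> bounded_rv (fun x => Rsum k (fun i => f i x)).
Proof.
  induction k as [|k IH]; intros H; simpl; [apply bounded_rv_const|].
  apply (bounded_rv_plus (fun x => Rsum k (fun i => f i x)) (f k));
    [apply IH; intros|]; apply H; lia.
Qed.

Lemma bounded_rv_of_range (f : Omega -> R) lo hi :
  (forall x, lo <= f x <= hi) -> bounded_rv f.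
Proof.
  intros H. exists (Rabs lo + Rabs hi). intros x. specialize (H x).
  split_Rabs; lra.
Qed.

End BoundedRV.

Section Expectation.
Context {Omega : Type} (E : (Omega -> R) -> R) (HE : is_expectation E).

Lemma E_ext (f g : Omega -> R) : (forall x, f x = g x) -> E f = E g.
Proof. intros H. f_equal. apply functional_extensionality, H. Qed.

Lemma E_plus (f g : Omega -> R) :
  bounded_rv f -> bounded_rv g -> E (fun x => f x + g x) = E f + E g.
Proof. apply HE. Qed.

Lemma E_scal c (f : Omega -> R) : bounded_rv f -> E (fun x => c * f x) = c * E f.
Proof. apply HE. Qed.

Lemma E_mono (f g : Omega -> R) :
  bounded_rv f -> bounded_rv g -> (forall x, f x <= g x) -> E f <= E g.
Proof. apply HE. Qed.

Lemma E_const c : E (fun _ => c) = c.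
Proof.
  rewrite (E_ext (fun _ => c) (fun _ => c * 1)) by (intros; ring).
  rewrite E_scal by apply bounded_rv_const.
  rewrite (proj2 (proj2 (proj2 HE))). ring.
Qed.

Lemma E_Rsum k (f : nat -> Omega -> R) : (forall i, (i < k)%nat -> bounded_rv (f i)) ->
  E (fun x => Rsum k (fun i => f i x)) = Rsum k (fun i => E (f i)).
Proof.
  induction k as [|k IH]; intros H; simpl; [apply E_const|].
  rewrite (E_plus (fun x => Rsum k (fun i => f i x)) (f k)).
  - rewrite IH; [reflexivity|]. intros; apply H; lia.
  - apply bounded_rv_Rsum. intros; apply H; lia.
  - apply H; lia.
Qed.

Definition centred (f : Omega -> R) : Omega -> R := fun x => f x - E f.

Lemma bounded_rv_centred f : bounded_rv f -> bounded_rv (centred f).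
Proof. intros Hf. apply bounded_rv_plus; [exact Hf|apply bounded_rv_const]. Qed.

Lemma E_centred f : bounded_rv f -> E (centred f) = 0.
Proof.
  intros Hf. unfold centred, Rminus.
  rewrite (E_plus f (fun _ => - E f)), E_const by auto using bounded_rv_const. ring.
Qed.

Lemma Var_nonneg f : bounded_rv f -> 0 <= Var E f.
Proof.
  intros Hf. unfold Var. rewrite <- (E_const 0).
  apply E_mono; [apply bounded_rv_const|apply bounded_rv_sq, bounded_rv_centred, Hf|].
  intros x. apply pow2_ge_0.
Qed.

(** Mutually independent bounded variables are pairwise uncorrelated:
    apply the product rule to the test functions t - E r_i, t - E r_j and 1. *)
Lemma independent_uncorrelated n (r : nat -> Omega -> R) i j :
  (forall k, (k < n)%nat -> bounded_rv (r k)) -> mutually_independent E n r ->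
  (i < j)%nat -> (j < n)%nat ->
  E (fun x => centred (r i) x * centred (r j) x) = 0.
Proof.
  intros Hb Hind Hij Hj.
  set (g k := if Nat.eqb k i then fun t => t - E (r i)
              else if Nat.eqb k j then fun t => t - E (r j) else fun _ : R => 1).
  assert (Hgi : g i = fun t => t - E (r i)) by (unfold g; rewrite Nat.eqb_refl; auto).
  assert (Hgj : g j = fun t => t - E (r j)).
  { unfold g. rewrite (proj2 (Nat.eqb_neq j i)), Nat.eqb_refl by lia. reflexivity. }
  assert (Hgk : forall k, k <> i -> k <> j -> g k = fun _ => 1).
  { intros k Hki Hkj. unfold g.
    rewrite (proj2 (Nat.eqb_neq k i)), (proj2 (Nat.eqb_neq k j)) by lia. reflexivity. }
  assert (Hcont : forall k, continuity (g k)).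
  { intros k. unfold g.
    assert (Hshift : forall c, continuity (fun t => t - c))
      by (intros c; reg).
    destruct (Nat.eqb k i); [apply Hshift|].
    destruct (Nat.eqb k j); [apply Hshift|apply continuity_const; intros ? ?; reflexivity]. }
  rewrite (E_ext _ (fun x => Rprod n (fun k => g k (r k x)))).
  - rewrite (Hind g Hcont), (Rprod_two _ _ i j Hij Hj).
    + rewrite Hgi. fold (centred (r i)). rewrite E_centred by (apply Hb; lia). ring.
    + intros k Hk Hki Hkj. rewrite Hgk by auto. apply E_const.
  - intros x. rewrite (Rprod_two _ _ i j Hij Hj).
    + rewrite Hgi, Hgj. reflexivity.
    + intros k Hk Hki Hkj. rewrite Hgk by auto. reflexivity.
Qed.

Section Orthogonal.
Variables (n : nat) (c : nat -> Omega -> R) (p : nat -> R).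
Hypothesis Hbnd : forall i, (i < n)%nat -> bounded_rv (c i).
Hypothesis Horth : forall i j, (i < j)%nat -> (j < n)%nat -> E (fun x => c i x * c j x) = 0.

Let S k x := Rsum k (fun i => p i * c i x).

Lemma bounded_rv_partial_sum k : (k <= n)%nat -> bounded_rv (S k).
Proof.
  intros Hk. apply (bounded_rv_Rsum k (fun i x => p i * c i x)).
  intros i Hi. apply bounded_rv_scal, Hbnd. lia.
Qed.

Lemma E_partial_sum_orth k : (k < n)%nat -> E (fun x => S k x * c k x) = 0.
Proof.
  intros Hk.
  rewrite (E_ext _ (fun x => Rsum k (fun i => p i * (c i x * c k x)))).
  - rewrite E_Rsum.
    + rewrite (Rsum_ext k _ (fun _ => 0)), Rsum_zero; [reflexivity|].
      intros i Hi. rewrite E_scal, Horth by (auto; apply bounded_rv_mult; apply Hbnd; lia).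
      ring.
    + intros i Hi. apply bounded_rv_scal, bounded_rv_mult; apply Hbnd; lia.
  - intros x. unfold S. rewrite Rmult_comm, <- Rsum_scal. apply Rsum_ext. intros; ring.
Qed.

Lemma E_sq_orthogonal_sum k : (k <= n)%nat ->
  E (fun x => S k x ^ 2) = Rsum k (fun i => p i ^ 2 * E (fun x => c i x ^ 2)).
Proof.
  induction k as [|k IH]; intros Hk.
  - simpl. rewrite <- (E_const 0). apply E_ext. intros; unfold S; simpl; ring.
  - assert (BS := bounded_rv_partial_sum k ltac:(lia)).
    assert (Bc := Hbnd k ltac:(lia)).
    cbn [Rsum]. rewrite (E_ext _ (fun x => (S k x ^ 2 + 2 * p k * (S k x * c k x))
                                   + p k ^ 2 * c k x ^ 2))
      by (intros; unfold S; simpl; ring).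
    rewrite E_plus, E_plus, E_scal, E_scal, E_partial_sum_orth, IH;
      auto using bounded_rv_sq, bounded_rv_scal, bounded_rv_mult, bounded_rv_plus;
      try lia.
    ring.
Qed.

End Orthogonal.

Lemma Var_weighted_sum n (r : nat -> Omega -> R) (p : nat -> R) :
  (forall i, (i < n)%nat -> bounded_rv (r i)) -> mutually_independent E n r ->
  Var E (fun x => Rsum n (fun i => p i * r i x)) = Rsum n (fun i => p i ^ 2 * Var E (r i)).
Proof.
  intros Hb Hind.
  assert (Hmean : E (fun x => Rsum n (fun i => p i * r i x)) = Rsum n (fun i => p i * E (r i))).
  { rewrite (E_Rsum n (fun i x => p i * r i x)).
    - apply Rsum_ext. intros i Hi. apply E_scal, Hb, Hi.
    - intros i Hi. apply bounded_rv_scal, Hb, Hi. }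
  unfold Var at 1. rewrite Hmean.
  rewrite (E_ext _ (fun x => Rsum n (fun i => p i * centred (r i) x) ^ 2)).
  - apply (E_sq_orthogonal_sum n (fun i => centred (r i)) p).
    + intros i Hi. apply bounded_rv_centred, Hb, Hi.
    + intros i j Hij Hj. apply (independent_uncorrelated n); auto.
    + apply le_n.
  - intros x. unfold centred.
    rewrite (Rsum_ext n (fun i => p i * (r i x - E (r i)))
                        (fun i => p i * r i x + (-1) * (p i * E (r i)))) by (intros; ring).
    rewrite Rsum_plus, Rsum_scal. ring.
Qed.

Lemma Var_convex_comb_bound n (r : nat -> Omega -> R) (p : nat -> R) sigma2 :
  (forall i, (i < n)%nat -> bounded_rv (r i)) -> mutually_independent E n r ->
  convex_weights n p -> (forall i, (i < n)%nat -> Var E (r i) <= sigma2) ->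
  Var E (fun x => Rsum n (fun i => p i * r i x)) <= sigma2.
Proof.
  intros Hb Hind Hp Hv. rewrite Var_weighted_sum by auto.
  apply convex_sq_weights_bound; [exact Hp|].
  intros i Hi. split; [apply Var_nonneg, Hb, Hi|apply Hv, Hi].
Qed.

End Expectation.

Theorem lemma1
  (X A Th : Type) (acts : list A)
  (Hacts : NoDup acts /\ forall a : A, In a acts)
  (pe pb : X -> A -> R)
  (Hpe : forall x, (forall a, 0 <= pe x a) /\ lsum acts (fun a => pe x a) = 1)
  (Hpb : forall x, (forall a, 0 <= pb x a) /\ lsum acts (fun a => pb x a) = 1)
  (Hoverlap : forall x a, 0 < pe x a -> 0 < pb x a)
  (Hwbdd : exists C, forall x a, 0 < pb x a -> wgt pe pb x a <= C)
  (Rmax : R) (Theta : Th -> Prop) (q : X -> A -> Th -> R)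
  (Hq : forall x a tau, Rabs (q x a tau) <= Rmax)
  (n : nat) (Hn : (1 <= n)%nat) (xs : nat -> X) (as_ : nat -> A)
  (Hsupp : forall i, (i < n)%nat -> 0 < pb (xs i) (as_ i))
  (xi_hat : R) (tau_hat : Th)
  (Hfeas : feasible acts pe pb q Theta n xs as_ xi_hat tau_hat)
  (Hmax : forall xi tau, feasible acts pe pb q Theta n xs as_ xi tau ->
            objective acts pe pb q n xs as_ xi tau
            <= objective acts pe pb q n xs as_ xi_hat tau_hat) :
  (* 1-boundedness *)
  (forall r : nat -> R, (forall i, (i < n)%nat -> 0 <= r i <= Rmax) ->
     0 <= beta_emp acts pe pb q n xs as_ xi_hat tau_hat r <= Rmax) /\
  (* stability, conditionally on D_{x,a} (fixed above) *)
  (forall (Omega : Type) (E : (Omega -> R) -> R) (r : nat -> Omega -> R) (sigma2 : R),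
     is_expectation E ->
     (forall i w, (i < n)%nat -> 0 <= r i w <= Rmax) ->
     mutually_independent E n r ->
     (forall i, (i < n)%nat -> Var E (r i) <= sigma2) ->
     Var E (fun w => beta_emp acts pe pb q n xs as_ xi_hat tau_hat (fun i => r i w))
       <= sigma2).
Proof.
  set (p := beta_weights X A Th acts pe pb q n xs as_ xi_hat tau_hat).
  assert (Hrep : forall r, beta_emp acts pe pb q n xs as_ xi_hat tau_hat r
                           = Rsum n (fun i => p i * r i))
    by (intros; eapply beta_emp_convex_comb; eauto).
  assert (Hp : convex_weights n p) by (eapply beta_weights_convex; eauto).
  split.
  - intros r Hr. rewrite Hrep. apply convex_comb_bounds; assumption.
  - intros Omega E r sigma2 HE Hr Hind Hv.
    rewrite (functional_extensionality _ (fun w => Rsum n (fun i => p i * r i w)))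
      by (intros; apply Hrep).
    apply Var_convex_comb_bound; auto.
    intros i Hi. apply (bounded_rv_of_range _ 0 Rmax). intros w. apply Hr, Hi.
Qed.
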